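(* (i) Let $\mathcal{F}$ be a nonempty set of bivariate distributions and let $\mathcal{F}_{X,Y}=\{(F(\cdot,\infty),F(\infty,\cdot)) : F\in\mathcal{F}\}$ be the set of pairs of margins occurring in $\mathcal{F}$. For $F_{X,Y}=(F_X,F_Y)\in\mathcal{F}_{X,Y}$ let $\mathcal{F}^{F_{X,Y}}$ be the set of members of $\mathcal{F}$ with margins $F_X,F_Y$, and let $\underline{\mathcal{F}}^{F_{X,Y}}$ and $\overline{\mathcal{F}}^{F_{X,Y}}$ be its pointwise infimum and supremum. Then there exists a family $\{(P_{F_{X,Y}},Q_{F_{X,Y}}) : F_{X,Y}\in\mathcal{F}_{X,Y}\}$ of coherent imprecise copulas such that $\underline{\mathcal{F}}^{F_{X,Y}}(x,y)=P_{F_{X,Y}}(F_X(x),F_Y(y))$ and $\overline{\mathcal{F}}^{F_{X,Y}}(x,y)=Q_{F_{X,Y}}(F_X(x),F_Y(y))$ for every $F_{X,Y}\in\mathcal{F}_{X,Y}$ and all $x,y\in\overline{\mathbb{R}}$. (ii) Let $\mathcal{F}_X,\mathcal{F}_Y$ be nonempty sets of univariate distributions, let $\mathcal{F}_{X,Y}\subseteq\mathcal{F}_X\times\mathcal{F}_Y$ be nonempty, and let $\{(P_{F_{X,Y}},Q_{F_{X,Y}})\}_{F_{X,Y}\in\mathcal{F}_{X,Y}}$ be a family of coherent imprecise copulas. Then $\mathcal{F}=\{C(F_X,F_Y) : (F_X,F_Y)\in\mathcal{F}_{X,Y},\ C\in\mathcal{C}(P_{F_{X,Y}},Q_{F_{X,Y}})\}$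 is a nonempty set of bivariate distributions.
   Context: $\overline{\mathbb{R}}=\mathbb{R}\cup\{-\infty,\infty\}$. A univariate distribution is a nondecreasing $G:\overline{\mathbb{R}}\to[0,1]$ with $G(-\infty)=0$, $G(\infty)=1$ (not necessarily right continuous). A bivariate distribution is $F:\overline{\mathbb{R}}^2\to[0,1]$ with $F(x,-\infty)=F(-\infty,y)=0$, $F(\infty,\infty)=1$ and $F(x_1,y_1)+F(x_2,y_2)-F(x_2,y_1)-F(x_1,y_2)\geqslant 0$ for all $x_1\leqslant x_2$, $y_1\leqslant y_2$; its margins are $F(\cdot,\infty)$ and $F(\infty,\cdot)$. A quasi-copula is $Q:[0,1]^2\to[0,1]$ with $Q(u,0)=Q(0,v)=0$, $Q(u,1)=u$, $Q(1,v)=v$, nondecreasing in each variable, and $|Q(u_1,v_1)-Q(u_2,v_2)|\leqslant|u_1-u_2|+|v_1-v_2|$; a copula is a quasi-copula with nonnegative volume of every rectangle in $[0,1]^2$. For quasi-copulas $P\leqslant Q$, $\mathcal{C}(P,Q)$ is the set of copulas $C$ with $P\leqslant C\leqslant Q$. A coherent imprecise copula is a pair of quasi-copulas $P\leqslant Q$ with $P=\inf\mathcal{C}(P,Q)$ and $Q=\sup\mathcal{C}(P,Q)$ (pointwise). $C(F_X,F_Y)$ denotes $(x,y)\mapsto C(F_X(x),F_Y(y))$. *)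

From Stdlib Require Import Reals.
From Coquelicot Require Export Rbar.
Open Scope R_scope.

Definition univariate_distribution (G : Rbar -> R) : Prop :=
  (forall x, 0 <= G x <= 1) /\
  (forall x y, Rbar_le x y -> G x <= G y) /\
  G m_infty = 0 /\ G p_infty = 1.

Definition bivariate_distribution (F : Rbar -> Rbar -> R) : Prop :=
  (forall x y, 0 <= F x y <= 1) /\
  (forall x, F x m_infty = 0) /\ (forall y, F m_infty y = 0) /\
  F p_infty p_infty = 1 /\
  (forall x1 x2 y1 y2, Rbar_le x1 x2 -> Rbar_le y1 y2 ->
     F x1 y1 + F x2 y2 - F x2 y1 - F x1 y2 >= 0).

Definition margin_X (F : Rbar -> Rbar -> R) : Rbar -> R := fun x => F x p_infty.
Definition margin_Y (F : Rbar -> Rbar -> R) : Rbar -> R := fun y => F p_infty y.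

Definition in01 (u : R) : Prop := 0 <= u <= 1.

(* Quasi-copula; only values on [0,1]^2 are relevant. *)
Definition quasi_copula (Q : R -> R -> R) : Prop :=
  (forall u v, in01 u -> in01 v -> in01 (Q u v)) /\
  (forall u, in01 u -> Q u 0 = 0) /\ (forall v, in01 v -> Q 0 v = 0) /\
  (forall u, in01 u -> Q u 1 = u) /\ (forall v, in01 v -> Q 1 v = v) /\
  (forall u1 u2 v, in01 u1 -> in01 u2 -> in01 v -> u1 <= u2 -> Q u1 v <= Q u2 v) /\
  (forall u v1 v2, in01 u -> in01 v1 -> in01 v2 -> v1 <= v2 -> Q u v1 <= Q u v2) /\
  (forall u1 u2 v1 v2, in01 u1 -> in01 u2 -> in01 v1 -> in01 v2 ->
     Rabs (Q u1 v1 - Q u2 v2) <= Rabs (u1 - u2) + Rabs (v1 - v2)).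

Definition copula (C : R -> R -> R) : Prop :=
  quasi_copula C /\
  (forall u1 u2 v1 v2, in01 u1 -> in01 u2 -> in01 v1 -> in01 v2 ->
     u1 <= u2 -> v1 <= v2 -> C u1 v1 + C u2 v2 - C u2 v1 - C u1 v2 >= 0).

Definition qle (P Q : R -> R -> R) : Prop :=
  forall u v, in01 u -> in01 v -> P u v <= Q u v.

Definition copulas_between (P Q : R -> R -> R) (C : R -> R -> R) : Prop :=
  copula C /\ qle P C /\ qle C Q.

Definition is_glb (E : R -> Prop) (m : R) : Prop :=
  (forall x, E x -> m <= x) /\ (forall b, (forall x, E x -> b <= x) -> b <= m).

Definition coherent_imprecise_copula (P Q : R -> R -> R) : Prop :=
  quasi_copula P /\ quasi_copula Q /\ qle P Q /\
  (forall u v, in01 u -> in01 v ->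
     is_glb (fun t => exists C, copulas_between P Q C /\ t = C u v) (P u v)) /\
  (forall u v, in01 u -> in01 v ->
     is_lub (fun t => exists C, copulas_between P Q C /\ t = C u v) (Q u v)).

Definition compose_copula (C : R -> R -> R) (FX FY : Rbar -> R) : Rbar -> Rbar -> R :=
  fun x y => C (FX x) (FY y).

(* By Sklar's theorem, which holds for distributions that are not right
   continuous as well, every F in the family is C_F(F_X, F_Y) for a copula C_F:
   F_X(x), F_Y(y) |-> F(x, y) is a subcopula, it extends to the closures of the
   ranges of the margins because it is 1-Lipschitz there, and then to [0,1]^2 by
   bilinear interpolation.  For fixed margins, the pointwise infimum and supremum
   P, Q of the copulas C_F are quasi-copulas, each C_F lies in C(P, Q), so P and Q
   are also the infimum and supremum of C(P, Q), and they represent the lower and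
   upper envelopes of the family.  Conversely, C(F_X, F_Y) is a bivariate
   distribution for every copula C, and C(P, Q) is nonempty when Q = sup C(P, Q). *)

From Stdlib Require Import Reals Lra Classical ClassicalEpsilon.
From Coquelicot Require Import Rbar Rcomplements.
Open Scope R_scope.

Definition sup (E : R -> Prop) : R := epsilon (inhabits 0) (is_lub E).
Definition inf (E : R -> Prop) : R := epsilon (inhabits 0) (is_glb E).

Lemma sup_spec (E : R -> Prop) :
  (exists x, E x) -> (exists b, forall x, E x -> x <= b) -> is_lub E (sup E).
Proof.
  intros Hne Hb. unfold sup. apply epsilon_spec.
  destruct (completeness E Hb Hne) as [m Hm]. now exists m.
Qed.

Lemma inf_spec (E : R -> Prop) :
  (exists x, E x) -> (exists b, forall x, E x -> b <= x) -> is_glb E (inf E).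
Proof.
  intros [x Hx] [b Hb]. unfold inf. apply epsilon_spec.
  destruct (completeness (fun y => E (- y))) as [m [Hub Hleast]].
  - exists (- b). intros y Hy. specialize (Hb _ Hy). lra.
  - exists (- x). now rewrite Ropp_involutive.
  - exists (- m). split.
    + intros y Hy. enough (- y <= m) by lra.
      apply Hub. now rewrite Ropp_involutive.
    + intros c Hc. enough (m <= - c) by lra.
      apply Hleast. intros y Hy. specialize (Hc _ Hy). lra.
Qed.

Lemma is_lub_iff (E1 E2 : R -> Prop) (m : R) :
  (forall t, E1 t <-> E2 t) -> is_lub E1 m -> is_lub E2 m.
Proof.
  intros HE [Hub Hleast]. split.
  - intros t Ht. apply Hub, HE, Ht.
  - intros b Hb. apply Hleast. intros t Ht. apply Hb, HE, Ht.
Qed.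

Lemma is_glb_iff (E1 E2 : R -> Prop) (m : R) :
  (forall t, E1 t <-> E2 t) -> is_glb E1 m -> is_glb E2 m.
Proof.
  intros HE [Hlb Hgreatest]. split.
  - intros t Ht. apply Hlb, HE, Ht.
  - intros b Hb. apply Hgreatest. intros t Ht. apply Hb, HE, Ht.
Qed.

Lemma is_glb_unique (E : R -> Prop) (m1 m2 : R) : is_glb E m1 -> is_glb E m2 -> m1 = m2.
Proof.
  intros [Hlb1 Hg1] [Hlb2 Hg2]. apply Rle_antisym; [apply Hg2 | apply Hg1]; assumption.
Qed.

Lemma quasi_copula_envelope (K : (R -> R -> R) -> Prop) (E : R -> R -> R) :
  (forall C, K C -> quasi_copula C) ->
  (forall u v s t, in01 u -> in01 v ->
     (forall C, K C -> s <= C u v <= t) -> s <= E u v <= t) ->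
  (forall u1 v1 u2 v2 e, in01 u1 -> in01 v1 -> in01 u2 -> in01 v2 ->
     (forall C, K C -> C u1 v1 <= C u2 v2 + e) -> E u1 v1 <= E u2 v2 + e) ->
  quasi_copula E.
Proof.
  intros HK Hbounds Hshift.
  assert (Hconst : forall u v t, in01 u -> in01 v ->
            (forall C, K C -> C u v = t) -> E u v = t).
  { intros u v t hu hv Ht. enough (t <= E u v <= t) by lra.
    apply Hbounds; auto. intros C hC. rewrite (Ht C hC). lra. }
  assert (I0 : in01 0) by (unfold in01; lra).
  assert (I1 : in01 1) by (unfold in01; lra).
  split; [|split; [|split; [|split; [|split; [|split; [|split]]]]]].
  - intros u v hu hv. apply Hbounds; auto. intros C hC.
    destruct (HK C hC) as [Hr _]. exact (Hr u v hu hv).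
  - intros u hu. apply Hconst; auto. intros C hC.
    destruct (HK C hC) as (_ & H0 & _). auto.
  - intros v hv. apply Hconst; auto. intros C hC.
    destruct (HK C hC) as (_ & _ & H0 & _). auto.
  - intros u hu. apply Hconst; auto. intros C hC.
    destruct (HK C hC) as (_ & _ & _ & H1 & _). auto.
  - intros v hv. apply Hconst; auto. intros C hC.
    destruct (HK C hC) as (_ & _ & _ & _ & H1 & _). auto.
  - intros u1 u2 v h1 h2 hv Hle. rewrite <- (Rplus_0_r (E u2 v)).
    apply Hshift; auto. intros C hC. rewrite Rplus_0_r.
    destruct (HK C hC) as (_ & _ & _ & _ & _ & Hmono & _). auto.
  - intros u v1 v2 hu h1 h2 Hle. rewrite <- (Rplus_0_r (E u v2)).
    apply Hshift; auto. intros C hC. rewrite Rplus_0_r.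
    destruct (HK C hC) as (_ & _ & _ & _ & _ & _ & Hmono & _). auto.
  - intros u1 u2 v1 v2 h1 h2 k1 k2.
    set (d := Rabs (u1 - u2) + Rabs (v1 - v2)).
    assert (Hd : forall C, K C -> - d <= C u1 v1 - C u2 v2 <= d).
    { intros C hC. apply Rabs_le_between.
      destruct (HK C hC) as (_ & _ & _ & _ & _ & _ & _ & Hlip). auto. }
    assert (E u1 v1 <= E u2 v2 + d).
    { apply Hshift; auto. intros C hC. specialize (Hd C hC). lra. }
    assert (E u2 v2 <= E u1 v1 + d).
    { apply Hshift; auto. intros C hC. specialize (Hd C hC). lra. }
    apply Rabs_le_between. lra.
Qed.

Definition values (K : (R -> R -> R) -> Prop) (u v t : R) : Prop :=
  exists C, K C /\ t = C u v.

Definition lower_envelope (K : (R -> R -> R) -> Prop) (u v : R) : R := inf (values K u v).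
Definition upper_envelope (K : (R -> R -> R) -> Prop) (u v : R) : R := sup (values K u v).

Section Envelopes.

Variable K : (R -> R -> R) -> Prop.
Hypothesis K_nonempty : exists C, K C.
Hypothesis K_copula : forall C, K C -> copula C.

Lemma values_in01 u v t : in01 u -> in01 v -> values K u v t -> in01 t.
Proof.
  intros hu hv [C [hC ->]]. destruct (K_copula C hC) as [[Hr _] _]. auto.
Qed.

Lemma lower_envelope_spec u v :
  in01 u -> in01 v -> is_glb (values K u v) (lower_envelope K u v).
Proof.
  intros hu hv. destruct K_nonempty as [C0 h0]. apply inf_spec.
  - exists (C0 u v), C0. auto.
  - exists 0. intros t Ht. apply (values_in01 u v t hu hv Ht).
Qed.

Lemma upper_envelope_spec u v :
  in01 u -> in01 v -> is_lub (values K u v) (upper_envelope K u v).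
Proof.
  intros hu hv. destruct K_nonempty as [C0 h0]. apply sup_spec.
  - exists (C0 u v), C0. auto.
  - exists 1. intros t Ht. apply (values_in01 u v t hu hv Ht).
Qed.

Lemma lower_envelope_le u v C : in01 u -> in01 v -> K C -> lower_envelope K u v <= C u v.
Proof. intros hu hv hC. apply (lower_envelope_spec u v hu hv). now exists C. Qed.

Lemma upper_envelope_ge u v C : in01 u -> in01 v -> K C -> C u v <= upper_envelope K u v.
Proof. intros hu hv hC. apply (upper_envelope_spec u v hu hv). now exists C. Qed.

Lemma lower_envelope_bounds u v s t : in01 u -> in01 v ->
  (forall C, K C -> s <= C u v <= t) -> s <= lower_envelope K u v <= t.
Proof.
  intros hu hv Hst. destruct K_nonempty as [C0 h0]. split.
  - apply (lower_envelope_spec u v hu hv). intros x [C [hC ->]]. apply Hst, hC.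
  - pose proof (lower_envelope_le u v C0 hu hv h0). pose proof (Hst C0 h0). lra.
Qed.

Lemma upper_envelope_bounds u v s t : in01 u -> in01 v ->
  (forall C, K C -> s <= C u v <= t) -> s <= upper_envelope K u v <= t.
Proof.
  intros hu hv Hst. destruct K_nonempty as [C0 h0]. split.
  - pose proof (upper_envelope_ge u v C0 hu hv h0). pose proof (Hst C0 h0). lra.
  - apply (upper_envelope_spec u v hu hv). intros x [C [hC ->]]. apply Hst, hC.
Qed.

Lemma lower_envelope_shift u1 v1 u2 v2 e : in01 u1 -> in01 v1 -> in01 u2 -> in01 v2 ->
  (forall C, K C -> C u1 v1 <= C u2 v2 + e) ->
  lower_envelope K u1 v1 <= lower_envelope K u2 v2 + e.
Proof.
  intros h1 k1 h2 k2 Hshift. enough (lower_envelope K u1 v1 - e <= lower_envelope K u2 v2) by lra.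
  apply (lower_envelope_spec u2 v2 h2 k2). intros x [C [hC ->]].
  pose proof (lower_envelope_le u1 v1 C h1 k1 hC). pose proof (Hshift C hC). lra.
Qed.

Lemma upper_envelope_shift u1 v1 u2 v2 e : in01 u1 -> in01 v1 -> in01 u2 -> in01 v2 ->
  (forall C, K C -> C u1 v1 <= C u2 v2 + e) ->
  upper_envelope K u1 v1 <= upper_envelope K u2 v2 + e.
Proof.
  intros h1 k1 h2 k2 Hshift. enough (upper_envelope K u1 v1 <= upper_envelope K u2 v2 + e) by lra.
  apply (upper_envelope_spec u1 v1 h1 k1). intros x [C [hC ->]].
  pose proof (upper_envelope_ge u2 v2 C h2 k2 hC). pose proof (Hshift C hC). lra.
Qed.

Lemma coherent_envelopes : coherent_imprecise_copula (lower_envelope K) (upper_envelope K).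
Proof.
  assert (HK : forall C, K C -> quasi_copula C) by (intros C hC; apply (K_copula C hC)).
  assert (Hbetween : forall C, K C ->
            copulas_between (lower_envelope K) (upper_envelope K) C).
  { intros C hC. split; [auto | split]; intros u v hu hv.
    - now apply lower_envelope_le.
    - now apply upper_envelope_ge. }
  split; [|split; [|split; [|split]]].
  - apply (quasi_copula_envelope K); auto using lower_envelope_bounds, lower_envelope_shift.
  - apply (quasi_copula_envelope K); auto using upper_envelope_bounds, upper_envelope_shift.
  - intros u v hu hv. destruct K_nonempty as [C0 h0].
    pose proof (lower_envelope_le u v C0 hu hv h0).
    pose proof (upper_envelope_ge u v C0 hu hv h0). lra.
  - intros u v hu hv. split.
    + intros t [C [[_ [HP _]] ->]]. now apply HP.
    + intros b Hb. apply (lower_envelope_spec u v hu hv). intros t [C [hC ->]].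
      apply Hb. exists C. auto.
  - intros u v hu hv. split.
    + intros t [C [[_ [_ HQ]] ->]]. now apply HQ.
    + intros b Hb. apply (upper_envelope_spec u v hu hv). intros t [C [hC ->]].
      apply Hb. exists C. auto.
Qed.

End Envelopes.

Lemma copula_of_2increasing (C : R -> R -> R) :
  (forall u, in01 u -> C u 0 = 0) -> (forall v, in01 v -> C 0 v = 0) ->
  (forall u, in01 u -> C u 1 = u) -> (forall v, in01 v -> C 1 v = v) ->
  (forall u1 u2 v1 v2, in01 u1 -> in01 u2 -> in01 v1 -> in01 v2 ->
     u1 <= u2 -> v1 <= v2 -> C u1 v1 + C u2 v2 - C u2 v1 - C u1 v2 >= 0) ->
  copula C.
Proof.
  intros Cu0 C0v Cu1 C1v H2inc.
  assert (I0 : in01 0) by (unfold in01; lra).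
  assert (I1 : in01 1) by (unfold in01; lra).
  assert (Hinc_u : forall u1 u2 v, in01 u1 -> in01 u2 -> in01 v -> u1 <= u2 ->
            0 <= C u2 v - C u1 v <= u2 - u1).
  { intros u1 u2 v h1 h2 hv Hle.
    pose proof (H2inc u1 u2 0 v h1 h2 I0 hv Hle (proj1 hv)).
    pose proof (H2inc u1 u2 v 1 h1 h2 hv I1 Hle (proj2 hv)).
    rewrite Cu0, Cu0, Cu1, Cu1 in * by assumption. lra. }
  assert (Hinc_v : forall u v1 v2, in01 u -> in01 v1 -> in01 v2 -> v1 <= v2 ->
            0 <= C u v2 - C u v1 <= v2 - v1).
  { intros u v1 v2 hu h1 h2 Hle.
    pose proof (H2inc 0 u v1 v2 I0 hu h1 h2 (proj1 hu) Hle).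
    pose proof (H2inc u 1 v1 v2 hu I1 h1 h2 (proj2 hu) Hle).
    rewrite C0v, C0v, C1v, C1v in * by assumption. lra. }
  assert (Hlip_u : forall u1 u2 v, in01 u1 -> in01 u2 -> in01 v ->
            Rabs (C u1 v - C u2 v) <= Rabs (u1 - u2)).
  { intros u1 u2 v h1 h2 hv. destruct (Rle_dec u1 u2) as [Hle | Hlt].
    - pose proof (Hinc_u u1 u2 v h1 h2 hv Hle). split_Rabs; lra.
    - pose proof (Hinc_u u2 u1 v h2 h1 hv ltac:(lra)). split_Rabs; lra. }
  assert (Hlip_v : forall u v1 v2, in01 u -> in01 v1 -> in01 v2 ->
            Rabs (C u v1 - C u v2) <= Rabs (v1 - v2)).
  { intros u v1 v2 hu h1 h2. destruct (Rle_dec v1 v2) as [Hle | Hlt].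
    - pose proof (Hinc_v u v1 v2 hu h1 h2 Hle). split_Rabs; lra.
    - pose proof (Hinc_v u v2 v1 hu h2 h1 ltac:(lra)). split_Rabs; lra. }
  split; [|exact H2inc].
  split; [|split; [|split; [|split; [|split; [|split; [|split]]]]]]; auto.
  - intros u v hu hv. pose proof (Hinc_v u 0 v hu I0 hv (proj1 hv)).
    pose proof (Hinc_v u v 1 hu hv I1 (proj2 hv)).
    rewrite Cu0, Cu1 in * by assumption. unfold in01 in *. lra.
  - intros u1 u2 v h1 h2 hv Hle. pose proof (Hinc_u u1 u2 v h1 h2 hv Hle). lra.
  - intros u v1 v2 hu h1 h2 Hle. pose proof (Hinc_v u v1 v2 hu h1 h2 Hle). lra.
  - intros u1 u2 v1 v2 h1 h2 k1 k2.
    pose proof (Hlip_u u1 u2 v1 h1 h2 k1). pose proof (Hlip_v u2 v1 v2 h2 k1 k2).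
    pose proof (Rdist_tri (C u1 v1) (C u2 v2) (C u2 v1)). unfold Rdist in *. lra.
Qed.

Definition transpose (F : Rbar -> Rbar -> R) : Rbar -> Rbar -> R := fun y x => F x y.

Lemma bivariate_transpose F : bivariate_distribution F -> bivariate_distribution (transpose F).
Proof.
  intros (Hr & Hx & Hy & H1 & H2inc). unfold transpose.
  split; [|split; [|split; [|split]]]; auto.
  intros y1 y2 x1 x2 Hy12 Hx12. specialize (H2inc x1 x2 y1 y2 Hx12 Hy12). lra.
Qed.

Section Bivariate.

Variable F : Rbar -> Rbar -> R.
Hypothesis HF : bivariate_distribution F.

Lemma bivariate_in01 x y : in01 (F x y).
Proof. apply HF. Qed.

Lemma bivariate_increment_x x1 x2 y : Rbar_le x1 x2 ->
  0 <= F x2 y - F x1 y <= margin_X F x2 - margin_X F x1.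
Proof.
  intros Hle. destruct HF as (_ & Hx & _ & _ & H2inc). unfold margin_X.
  pose proof (H2inc x1 x2 m_infty y Hle ltac:(now destruct y)).
  pose proof (H2inc x1 x2 y p_infty Hle ltac:(now destruct y)).
  rewrite !Hx in *. lra.
Qed.

Lemma bivariate_lipschitz_x x1 x2 y :
  Rabs (F x1 y - F x2 y) <= Rabs (margin_X F x1 - margin_X F x2).
Proof.
  destruct (Rbar_le_lt_dec x1 x2) as [Hle | Hlt].
  - pose proof (bivariate_increment_x x1 x2 y Hle). split_Rabs; lra.
  - pose proof (bivariate_increment_x x2 x1 y (Rbar_lt_le _ _ Hlt)). split_Rabs; lra.
Qed.

Lemma univariate_margin_X : univariate_distribution (margin_X F).
Proof.
  destruct HF as (Hr & _ & Hy & H1 & _). unfold margin_X.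
  split; [|split; [|split]]; auto.
  intros x1 x2 Hle. pose proof (bivariate_increment_x x1 x2 p_infty Hle). lra.
Qed.

End Bivariate.

Lemma univariate_margin_Y F : bivariate_distribution F -> univariate_distribution (margin_Y F).
Proof. intros HF. exact (univariate_margin_X _ (bivariate_transpose F HF)). Qed.

Lemma bivariate_lipschitz F x1 x2 y1 y2 : bivariate_distribution F ->
  Rabs (F x1 y1 - F x2 y2) <=
  Rabs (margin_X F x1 - margin_X F x2) + Rabs (margin_Y F y1 - margin_Y F y2).
Proof.
  intros HF.
  pose proof (bivariate_lipschitz_x F HF x1 x2 y1).
  pose proof (bivariate_lipschitz_x _ (bivariate_transpose F HF) y1 y2 x2) as Hy.
  change (Rabs (F x2 y1 - F x2 y2) <= Rabs (margin_Y F y1 - margin_Y F y2)) in Hy.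
  pose proof (Rdist_tri (F x1 y1) (F x2 y2) (F x2 y1)). unfold Rdist in *. lra.
Qed.

Definition range (G : Rbar -> R) (t : R) : Prop := exists x, t = G x.

Definition closure (A : R -> Prop) (u : R) : Prop :=
  forall eps, 0 < eps -> exists a, A a /\ Rabs (a - u) < eps.

Definition unit_range (A : R -> Prop) : Prop := A 0 /\ A 1 /\ forall a, A a -> in01 a.

Lemma unit_range_range G : univariate_distribution G -> unit_range (range G).
Proof.
  intros (Hr & _ & H0 & H1). split; [|split].
  - exists m_infty. auto.
  - exists p_infty. auto.
  - intros a [x ->]. apply Hr.
Qed.

Lemma closure_eq_0 (A : R -> Prop) u d : closure A u ->
  (forall a, A a -> Rabs d <= 2 * Rabs (a - u)) -> d = 0.
Proof.
  intros Hu Hd. destruct (Req_dec d 0) as [-> | Hne]; [reflexivity | exfalso].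
  pose proof (Rabs_pos_lt d Hne).
  destruct (Hu (Rabs d / 4)) as [a [Ha Hau]]; [lra |].
  specialize (Hd a Ha). lra.
Qed.

(* If the approximants come in the wrong order, monotonicity squeezes G x2
   within eps of u1 as well. *)
Lemma closure_range_ordered G u1 u2 eps :
  (forall x y, Rbar_le x y -> G x <= G y) ->
  closure (range G) u1 -> closure (range G) u2 -> u1 <= u2 -> 0 < eps ->
  exists x1 x2, Rbar_le x1 x2 /\ Rabs (G x1 - u1) < eps /\ Rabs (G x2 - u2) < eps.
Proof.
  intros Hmono Hu1 Hu2 Hle Heps.
  destruct (Hu1 eps Heps) as [a1 [[x1 ->] H1]].
  destruct (Hu2 eps Heps) as [a2 [[x2 ->] H2]].
  destruct (Rbar_le_lt_dec x1 x2) as [Hx | Hx].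
  - exists x1, x2. auto.
  - exists x2, x2. split; [apply Rbar_le_refl | split; auto].
    pose proof (Hmono _ _ (Rbar_lt_le _ _ Hx)). split_Rabs; lra.
Qed.

Definition floor_in (A : R -> Prop) (u : R) : R := sup (fun a => A a /\ a <= u).
Definition ceil_in (A : R -> Prop) (u : R) : R := inf (fun a => A a /\ u <= a).

(* When floor_in A u = ceil_in A u, both equal u and the weight 0 is arbitrary. *)
Definition weight (A : R -> Prop) (u : R) : R :=
  if Req_EM_T (floor_in A u) (ceil_in A u) then 0
  else (u - floor_in A u) / (ceil_in A u - floor_in A u).

Definition interp (A : R -> Prop) (g : R -> R) (u : R) : R :=
  g (floor_in A u) + weight A u * (g (ceil_in A u) - g (floor_in A u)).

Section UnitRange.

Variable A : R -> Prop.
Hypothesis HA : unit_range A.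

Lemma floor_in_spec u : in01 u -> is_lub (fun a => A a /\ a <= u) (floor_in A u).
Proof.
  intros hu. destruct HA as (A0 & _). apply sup_spec.
  - exists 0. split; [exact A0 | apply hu].
  - exists u. intros a [_ Hau]. exact Hau.
Qed.

Lemma ceil_in_spec u : in01 u -> is_glb (fun a => A a /\ u <= a) (ceil_in A u).
Proof.
  intros hu. destruct HA as (_ & A1 & _). apply inf_spec.
  - exists 1. split; [exact A1 | apply hu].
  - exists u. intros a [_ Hua]. exact Hua.
Qed.

Lemma floor_in_le_ceil_in u : in01 u -> floor_in A u <= u <= ceil_in A u.
Proof.
  intros hu. split.
  - apply (floor_in_spec u hu). intros a [_ Hau]. exact Hau.
  - apply (ceil_in_spec u hu). intros a [_ Hua]. exact Hua.
Qed.

Lemma closure_floor_in u : in01 u -> closure A (floor_in A u).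
Proof.
  intros hu eps Heps. destruct (floor_in_spec u hu) as [Hub Hleast].
  apply NNPP. intros Hnone.
  enough (floor_in A u <= floor_in A u - eps) by lra.
  apply Hleast. intros a [Ha Hau]. apply Rnot_lt_le. intros Hlt.
  apply Hnone. exists a. split; [exact Ha |].
  pose proof (Hub a (conj Ha Hau)). apply Rabs_def1; lra.
Qed.

Lemma closure_ceil_in u : in01 u -> closure A (ceil_in A u).
Proof.
  intros hu eps Heps. destruct (ceil_in_spec u hu) as [Hlb Hgreatest].
  apply NNPP. intros Hnone.
  enough (ceil_in A u + eps <= ceil_in A u) by lra.
  apply Hgreatest. intros a [Ha Hua]. apply Rnot_lt_le. intros Hlt.
  apply Hnone. exists a. split; [exact Ha |].
  pose proof (Hlb a (conj Ha Hua)). apply Rabs_def1; lra.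
Qed.

Lemma floor_in_id a : A a -> floor_in A a = a.
Proof.
  intros Ha. destruct HA as (_ & _ & H01).
  destruct (floor_in_spec a (H01 a Ha)) as [Hub Hleast]. apply Rle_antisym.
  - apply Hleast. intros b [_ Hba]. exact Hba.
  - apply Hub. split; [exact Ha | apply Rle_refl].
Qed.

(* If ceil_in A u1 > floor_in A u2, then A misses [u1, u2]. *)
Lemma floor_ceil_in_cases u1 u2 : in01 u1 -> in01 u2 -> u1 <= u2 ->
  ceil_in A u1 <= floor_in A u2 \/
  (floor_in A u1 = floor_in A u2 /\ ceil_in A u1 = ceil_in A u2).
Proof.
  intros h1 h2 Hle.
  destruct (Rle_lt_dec (ceil_in A u1) (floor_in A u2)) as [Hsep | Hgap]; [left; exact Hsep | right].
  assert (Hempty : forall a, A a -> u1 <= a -> a <= u2 -> False).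
  { intros a Ha H1a Ha2.
    pose proof (proj1 (ceil_in_spec u1 h1) a (conj Ha H1a)).
    pose proof (proj1 (floor_in_spec u2 h2) a (conj Ha Ha2)). lra. }
  split.
  - apply (is_lub_u (fun a => A a /\ a <= u2)); [| apply floor_in_spec; exact h2].
    apply (is_lub_iff (fun a => A a /\ a <= u1)); [| apply floor_in_spec; exact h1].
    intros a. split; intros [Ha Hau]; split; auto; [lra |].
    destruct (Rle_lt_dec u1 a); [exfalso; apply (Hempty a) |]; auto; lra.
  - apply (is_glb_unique (fun a => A a /\ u1 <= a)); [apply ceil_in_spec; exact h1 |].
    apply (is_glb_iff (fun a => A a /\ u2 <= a)); [| apply ceil_in_spec; exact h2].
    intros a. split; intros [Ha Hua]; split; auto; [lra |].
    destruct (Rle_lt_dec a u2); [exfalso; apply (Hempty a) |]; auto; lra.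
Qed.

Lemma weight_in01 u : in01 u -> in01 (weight A u).
Proof.
  intros hu. pose proof (floor_in_le_ceil_in u hu). unfold weight, in01.
  destruct Req_EM_T as [_ | Hne]; [lra |].
  assert (Hlt : floor_in A u < ceil_in A u).
  { destruct (Rle_lt_or_eq_dec (floor_in A u) (ceil_in A u) ltac:(lra)) as [Hlt | Heq];
      [exact Hlt | contradiction]. }
  split.
  - apply Rdiv_le_0_compat; lra.
  - apply (Rdiv_le_1 (u - floor_in A u)); lra.
Qed.

Lemma interp_minus g1 g2 u :
  interp A g2 u - interp A g1 u = interp A (fun k => g2 k - g1 k) u.
Proof. unfold interp. ring. Qed.

Lemma interp_const c u : interp A (fun _ => c) u = c.
Proof. unfold interp. ring. Qed.

Lemma interp_ext g1 g2 u : in01 u ->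
  (forall k, closure A k -> g1 k = g2 k) -> interp A g1 u = interp A g2 u.
Proof.
  intros hu Hg. unfold interp.
  rewrite (Hg _ (closure_floor_in u hu)), (Hg _ (closure_ceil_in u hu)). reflexivity.
Qed.

Lemma interp_id u : in01 u -> interp A (fun k => k) u = u.
Proof.
  intros hu. pose proof (floor_in_le_ceil_in u hu). unfold interp, weight.
  destruct Req_EM_T as [Heq | Hne]; [lra |]. field. lra.
Qed.

Lemma interp_at_point g a : A a -> interp A g a = g a.
Proof.
  intros Ha. unfold interp, weight. rewrite (floor_in_id a Ha).
  destruct Req_EM_T; [| rewrite Rminus_eq_0; unfold Rdiv]; ring.
Qed.

Lemma interp_monotone g u1 u2 :
  (forall k1 k2, closure A k1 -> closure A k2 -> k1 <= k2 -> g k1 <= g k2) ->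
  in01 u1 -> in01 u2 -> u1 <= u2 -> interp A g u1 <= interp A g u2.
Proof.
  intros Hg h1 h2 Hle.
  pose proof (closure_floor_in u1 h1). pose proof (closure_ceil_in u1 h1).
  pose proof (closure_floor_in u2 h2). pose proof (closure_ceil_in u2 h2).
  pose proof (floor_in_le_ceil_in u1 h1). pose proof (floor_in_le_ceil_in u2 h2).
  pose proof (weight_in01 u1 h1). pose proof (weight_in01 u2 h2).
  assert (Hg1 : g (floor_in A u1) <= g (ceil_in A u1)) by (apply Hg; auto; lra).
  assert (Hg2 : g (floor_in A u2) <= g (ceil_in A u2)) by (apply Hg; auto; lra).
  unfold interp, in01 in *.
  destruct (floor_ceil_in_cases u1 u2 h1 h2 Hle) as [Hsep | [Hfloor Hceil]].
  - assert (g (ceil_in A u1) <= g (floor_in A u2)) by (apply Hg; auto).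
    assert (weight A u1 * (g (ceil_in A u1) - g (floor_in A u1))
            <= g (ceil_in A u1) - g (floor_in A u1)) by nra.
    assert (0 <= weight A u2 * (g (ceil_in A u2) - g (floor_in A u2))) by nra.
    lra.
  - assert (weight A u1 <= weight A u2).
    { unfold weight. rewrite Hfloor, Hceil.
      destruct Req_EM_T as [_ | Hne]; [lra |].
      apply Rmult_le_compat_r; [| lra].
      apply Rlt_le, Rinv_0_lt_compat.
      destruct (Rle_lt_or_eq_dec (floor_in A u2) (ceil_in A u2) ltac:(lra));
        [lra | contradiction]. }
    rewrite Hfloor, Hceil in *. nra.
Qed.

Lemma interp_difference_monotone g1 g2 u1 u2 :
  (forall k1 k2, closure A k1 -> closure A k2 -> k1 <= k2 ->
     g2 k1 - g1 k1 <= g2 k2 - g1 k2) ->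
  in01 u1 -> in01 u2 -> u1 <= u2 ->
  interp A g2 u1 - interp A g1 u1 <= interp A g2 u2 - interp A g1 u2.
Proof. intros. rewrite !interp_minus. now apply interp_monotone. Qed.

End UnitRange.

Definition subcopula (D1 D2 : R -> Prop) (S : R -> R -> R) : Prop :=
  (forall u, D1 u -> S u 0 = 0) /\ (forall v, D2 v -> S 0 v = 0) /\
  (forall u, D1 u -> S u 1 = u) /\ (forall v, D2 v -> S 1 v = v) /\
  (forall u1 u2 v1 v2, D1 u1 -> D1 u2 -> D2 v1 -> D2 v2 -> u1 <= u2 -> v1 <= v2 ->
     S u1 v1 + S u2 v2 - S u2 v1 - S u1 v2 >= 0).

Definition bilinear_extension (A B : R -> Prop) (S : R -> R -> R) (u v : R) : R :=
  interp A (fun k => interp B (S k) v) u.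

Lemma copula_bilinear_extension A B S : unit_range A -> unit_range B ->
  subcopula (closure A) (closure B) S -> copula (bilinear_extension A B S).
Proof.
  intros HA HB (Su0 & S0v & Su1 & S1v & S2inc).
  pose proof HA as (A0 & A1 & _). pose proof HB as (B0 & B1 & _).
  unfold bilinear_extension. apply copula_of_2increasing.
  - intros u hu. rewrite (interp_ext A HA _ (fun _ => 0) u hu); [apply interp_const |].
    intros k Hk. rewrite interp_at_point; auto.
  - intros v hv. rewrite (interp_at_point A HA) by exact A0.
    rewrite (interp_ext B HB _ (fun _ => 0) v hv); [apply interp_const | exact S0v].
  - intros u hu. rewrite (interp_ext A HA _ (fun k => k) u hu); [now apply interp_id |].
    intros k Hk. rewrite interp_at_point; auto.
  - intros v hv. rewrite (interp_at_point A HA) by exact A1.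
    rewrite (interp_ext B HB _ (fun k => k) v hv); [now apply interp_id | exact S1v].
  - intros u1 u2 v1 v2 h1 h2 k1 k2 Hu Hv.
    enough (interp A (fun k => interp B (S k) v2) u1 - interp A (fun k => interp B (S k) v1) u1
            <= interp A (fun k => interp B (S k) v2) u2 - interp A (fun k => interp B (S k) v1) u2)
      by lra.
    apply interp_difference_monotone; auto. intros a1 a2 Ha1 Ha2 Ha.
    enough (interp B (S a2) v1 - interp B (S a1) v1 <= interp B (S a2) v2 - interp B (S a1) v2)
      by lra.
    apply interp_difference_monotone; auto. intros b1 b2 Hb1 Hb2 Hb.
    specialize (S2inc a1 a2 b1 b2 Ha1 Ha2 Hb1 Hb2 Ha Hb). lra.
Qed.

Section NearDistribution.

Variable F : Rbar -> Rbar -> R.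
Variable S : R -> R -> R.
Hypothesis HF : bivariate_distribution F.
Hypothesis S_near : forall u v x y,
  Rabs (S u v - F x y) <= Rabs (margin_X F x - u) + Rabs (margin_Y F y - v).

Lemma near_on_ranges x y : S (margin_X F x) (margin_Y F y) = F x y.
Proof. pose proof (S_near (margin_X F x) (margin_Y F y) x y). split_Rabs; lra. Qed.

Lemma near_grounded u : closure (range (margin_X F)) u -> S u 0 = 0.
Proof.
  intros Hu. apply (closure_eq_0 _ u _ Hu). intros a [x ->].
  pose proof (S_near u 0 x m_infty) as Hx.
  destruct HF as (_ & Hm & _). unfold margin_Y in Hx. rewrite !Hm in Hx.
  split_Rabs; lra.
Qed.

Lemma near_uniform_margin u : closure (range (margin_X F)) u -> S u 1 = u.
Proof.
  intros Hu. enough (S u 1 - u = 0) by lra.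
  apply (closure_eq_0 _ u _ Hu). intros a [x ->].
  pose proof (S_near u 1 x p_infty) as Hx.
  destruct HF as (_ & _ & _ & H1 & _). unfold margin_X, margin_Y in *. rewrite H1 in Hx.
  split_Rabs; lra.
Qed.

Lemma near_2increasing u1 u2 v1 v2 :
  closure (range (margin_X F)) u1 -> closure (range (margin_X F)) u2 ->
  closure (range (margin_Y F)) v1 -> closure (range (margin_Y F)) v2 ->
  u1 <= u2 -> v1 <= v2 -> S u1 v1 + S u2 v2 - S u2 v1 - S u1 v2 >= 0.
Proof.
  intros Hu1 Hu2 Hv1 Hv2 Hu Hv. apply Rle_ge, Rle_plus_epsilon. intros eps Heps.
  set (e := eps / 8). assert (He : 0 < e) by (unfold e; lra).
  assert (Hclose : forall u v x y, Rabs (margin_X F x - u) < e -> Rabs (margin_Y F y - v) < e ->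
            S u v - F x y < 2 * e /\ - (2 * e) < S u v - F x y).
  { intros u v x y Hx Hy. apply Rabs_def2. pose proof (S_near u v x y). lra. }
  destruct (univariate_margin_X F HF) as (_ & HmonoX & _).
  destruct (univariate_margin_Y F HF) as (_ & HmonoY & _).
  destruct (closure_range_ordered _ u1 u2 e HmonoX Hu1 Hu2 Hu He) as (x1 & x2 & Hx & Hx1 & Hx2).
  destruct (closure_range_ordered _ v1 v2 e HmonoY Hv1 Hv2 Hv He) as (y1 & y2 & Hy & Hy1 & Hy2).
  destruct HF as (_ & _ & _ & _ & H2inc). specialize (H2inc x1 x2 y1 y2 Hx Hy).
  pose proof (Hclose u1 v1 x1 y1 Hx1 Hy1). pose proof (Hclose u2 v2 x2 y2 Hx2 Hy2).
  pose proof (Hclose u2 v1 x2 y1 Hx2 Hy1). pose proof (Hclose u1 v2 x1 y2 Hx1 Hy2).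
  unfold e in *. lra.
Qed.

End NearDistribution.

Lemma subcopula_near F S : bivariate_distribution F ->
  (forall u v x y,
     Rabs (S u v - F x y) <= Rabs (margin_X F x - u) + Rabs (margin_Y F y - v)) ->
  subcopula (closure (range (margin_X F))) (closure (range (margin_Y F))) S.
Proof.
  intros HF S_near.
  pose proof (bivariate_transpose F HF) as HFt.
  assert (St_near : forall v u y x,
            Rabs (S u v - F x y) <= Rabs (margin_Y F y - v) + Rabs (margin_X F x - u))
    by (intros; rewrite Rplus_comm; apply S_near).
  split; [|split; [|split; [|split]]].
  - exact (near_grounded F S HF S_near).
  - exact (near_grounded (transpose F) (fun v u => S u v) HFt St_near).
  - exact (near_uniform_margin F S HF S_near).
  - exact (near_uniform_margin (transpose F) (fun v u => S u v) HFt St_near).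
  - exact (near_2increasing F S HF S_near).
Qed.

(* McShane's formula: the largest function that agrees with the subcopula
   (F_X x, F_Y y) |-> F x y and is 1-Lipschitz for the l1 distance. *)
Definition mcshane_extension (F : Rbar -> Rbar -> R) (u v : R) : R :=
  inf (fun t => exists x y, t = F x y + Rabs (margin_X F x - u) + Rabs (margin_Y F y - v)).

Lemma mcshane_extension_near F : bivariate_distribution F -> forall u v x y,
  Rabs (mcshane_extension F u v - F x y) <=
  Rabs (margin_X F x - u) + Rabs (margin_Y F y - v).
Proof.
  intros HF u v x y. unfold mcshane_extension.
  set (E := fun t => exists x y, t = F x y + Rabs (margin_X F x - u) + Rabs (margin_Y F y - v)).
  destruct (inf_spec E) as [Hlb Hgreatest].
  - exists (F x y + Rabs (margin_X F x - u) + Rabs (margin_Y F y - v)), x, y. reflexivity.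
  - exists 0. intros t [x' [y' ->]]. pose proof (bivariate_in01 F HF x' y').
    pose proof (Rabs_pos (margin_X F x' - u)). pose proof (Rabs_pos (margin_Y F y' - v)).
    unfold in01 in *. lra.
  - apply Rabs_le_between. split.
    + enough (F x y - Rabs (margin_X F x - u) - Rabs (margin_Y F y - v) <= inf E) by lra.
      apply Hgreatest. intros t [x' [y' ->]].
      pose proof (bivariate_lipschitz F x x' y y' HF).
      pose proof (Rdist_tri (margin_X F x) (margin_X F x') u).
      pose proof (Rdist_tri (margin_Y F y) (margin_Y F y') v). unfold Rdist in *.
      pose proof (Rabs_minus_sym u (margin_X F x')). pose proof (Rabs_minus_sym v (margin_Y F y')).
      pose proof (Rle_abs (F x y - F x' y')). lra.
    + enough (inf E <= F x y + Rabs (margin_X F x - u) + Rabs (margin_Y F y - v)) by lra.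
      apply Hlb. exists x, y. reflexivity.
Qed.

Definition sklar_copula (F : Rbar -> Rbar -> R) : R -> R -> R :=
  bilinear_extension (range (margin_X F)) (range (margin_Y F)) (mcshane_extension F).

Lemma copula_sklar_copula F : bivariate_distribution F -> copula (sklar_copula F).
Proof.
  intros HF. apply copula_bilinear_extension.
  - apply unit_range_range, univariate_margin_X, HF.
  - apply unit_range_range, univariate_margin_Y, HF.
  - apply subcopula_near; [exact HF | apply mcshane_extension_near, HF].
Qed.

Lemma sklar_copula_margins F x y : bivariate_distribution F ->
  sklar_copula F (margin_X F x) (margin_Y F y) = F x y.
Proof.
  intros HF. unfold sklar_copula, bilinear_extension.
  rewrite (interp_at_point _ (unit_range_range _ (univariate_margin_X F HF))) by now exists x.
  rewrite (interp_at_point _ (unit_range_range _ (univariate_margin_Y F HF))) by now exists y.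
  apply near_on_ranges, mcshane_extension_near, HF.
Qed.

Definition sklar_copulas (Fam : (Rbar -> Rbar -> R) -> Prop) (FX FY : Rbar -> R)
  (C : R -> R -> R) : Prop :=
  exists F, Fam F /\ margin_X F = FX /\ margin_Y F = FY /\ C = sklar_copula F.

Lemma values_sklar_copulas Fam FX FY x y t :
  (forall F, Fam F -> bivariate_distribution F) ->
  values (sklar_copulas Fam FX FY) (FX x) (FY y) t <->
  exists F, Fam F /\ margin_X F = FX /\ margin_Y F = FY /\ t = F x y.
Proof.
  intros HFam. split.
  - intros [C [[F (HF & <- & <- & ->)] ->]]. exists F.
    split; [exact HF | split; [reflexivity | split; [reflexivity |]]].
    apply sklar_copula_margins, HFam, HF.
  - intros [F (HF & <- & <- & ->)]. exists (sklar_copula F). split.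
    + exists F. auto.
    + symmetry. apply sklar_copula_margins, HFam, HF.
Qed.

Lemma bivariate_compose_copula C FX FY : copula C ->
  univariate_distribution FX -> univariate_distribution FY ->
  bivariate_distribution (compose_copula C FX FY).
Proof.
  intros [(Hr & Hu0 & H0v & Hu1 & _) H2inc] (FXr & FXm & FX0 & FX1) (FYr & FYm & FY0 & FY1).
  unfold compose_copula. split; [|split; [|split; [|split]]].
  - intros x y. apply Hr; [apply FXr | apply FYr].
  - intros x. rewrite FY0. apply Hu0, FXr.
  - intros y. rewrite FX0. apply H0v, FYr.
  - rewrite FX1, FY1. apply Hu1. unfold in01; lra.
  - intros x1 x2 y1 y2 Hx Hy.
    apply H2inc; [apply FXr | apply FXr | apply FYr | apply FYr | apply FXm | apply FYm]; auto.
Qed.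

Lemma copulas_between_nonempty P Q :
  coherent_imprecise_copula P Q -> exists C, copulas_between P Q C.
Proof.
  intros (_ & _ & _ & _ & Hsup). apply NNPP. intros Hnone.
  (* The empty set has no least upper bound. *)
  assert (I0 : in01 0) by (unfold in01; lra).
  destruct (Hsup 0 0 I0 I0) as [_ Hleast].
  enough (Q 0 0 <= Q 0 0 - 1) by lra.
  apply Hleast. intros t [C [HC _]]. exfalso. apply Hnone. now exists C.
Qed.

Theorem theorem14 :
  (* (i) *)
  (forall (Fam : (Rbar -> Rbar -> R) -> Prop),
     (exists F, Fam F) ->
     (forall F, Fam F -> bivariate_distribution F) ->
     exists PQ : (Rbar -> R) * (Rbar -> R) -> (R -> R -> R) * (R -> R -> R),
       forall FX FY : Rbar -> R,
         (exists F, Fam F /\ margin_X F = FX /\ margin_Y F = FY) ->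
         coherent_imprecise_copula (fst (PQ (FX, FY))) (snd (PQ (FX, FY))) /\
         (forall x y,
            is_glb (fun t => exists F, Fam F /\ margin_X F = FX /\ margin_Y F = FY /\ t = F x y)
                   (fst (PQ (FX, FY)) (FX x) (FY y))) /\
         (forall x y,
            is_lub (fun t => exists F, Fam F /\ margin_X F = FX /\ margin_Y F = FY /\ t = F x y)
                   (snd (PQ (FX, FY)) (FX x) (FY y))))
  /\
  (* (ii) *)
  (forall (FamX FamY : (Rbar -> R) -> Prop)
          (FamXY : (Rbar -> R) -> (Rbar -> R) -> Prop)
          (PQ : (Rbar -> R) -> (Rbar -> R) -> (R -> R -> R) * (R -> R -> R)),
     (exists G, FamX G) -> (forall G, FamX G -> univariate_distribution G) ->
     (exists G, FamY G) -> (forall G, FamY G -> univariate_distribution G) ->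
     (forall FX FY, FamXY FX FY -> FamX FX /\ FamY FY) ->
     (exists FX FY, FamXY FX FY) ->
     (forall FX FY, FamXY FX FY ->
        coherent_imprecise_copula (fst (PQ FX FY)) (snd (PQ FX FY))) ->
     let Fam := fun F : Rbar -> Rbar -> R =>
       exists FX FY C, FamXY FX FY /\
         copulas_between (fst (PQ FX FY)) (snd (PQ FX FY)) C /\
         F = compose_copula C FX FY in
     (exists F, Fam F) /\ (forall F, Fam F -> bivariate_distribution F)).
Proof.
  split.
  - intros Fam _ HFam.
    exists (fun m => (lower_envelope (sklar_copulas Fam (fst m) (snd m)),
                      upper_envelope (sklar_copulas Fam (fst m) (snd m)))).
    intros FX FY [F0 (HF0 & HX0 & HY0)]. cbn [fst snd].
    set (K := sklar_copulas Fam FX FY).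
    assert (K_nonempty : exists C, K C) by (exists (sklar_copula F0), F0; auto).
    assert (K_copula : forall C, K C -> copula C).
    { intros C [F (HF & _ & _ & ->)]. apply copula_sklar_copula, HFam, HF. }
    assert (Hin01 : forall x y, in01 (FX x) /\ in01 (FY y)).
    { intros x y. rewrite <- HX0, <- HY0. split; apply (bivariate_in01 F0 (HFam F0 HF0)). }
    split; [now apply coherent_envelopes | split]; intros x y; destruct (Hin01 x y) as [hx hy].
    + apply (is_glb_iff (values K (FX x) (FY y))); [| now apply lower_envelope_spec].
      intros t. now apply values_sklar_copulas.
    + apply (is_lub_iff (values K (FX x) (FY y))); [| now apply upper_envelope_spec].
      intros t. now apply values_sklar_copulas.
  - intros FamX FamY FamXY PQ _ HX _ HY HXY [FX [FY HFXY]] Hcoh Fam. split.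
    + destruct (copulas_between_nonempty _ _ (Hcoh FX FY HFXY)) as [C HC].
      exists (compose_copula C FX FY), FX, FY, C. auto.
    + intros F (GX & GY & C & HG & [HC _] & ->). destruct (HXY GX GY HG) as [HGX HGY].
      apply bivariate_compose_copula; auto.
Qed.
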